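(* Let $\mathscr T$ be a functor satisfying (T1)–(T4). Then $\Psi$, defined on objects by $\Psi(\mathfrak K)=(\widetilde K,\preceq,{}^\perp)$ and on morphisms by $\Psi(\phi)=\phi|_{\widetilde K_1}$ for $\phi\colon\mathfrak K_1\to\mathfrak K_2$, is a functor from $\mathscr T\mathbb{ODA}$ to $\mathbb{COL}$.
   Context: An involutive unital quantale is $(Q,\bigsqcup,\odot,{}^*,e)$: complete join-semilattice $Q$, associative $\odot$ distributing over arbitrary joins in each argument, unit $e$, ${}^*$ with $x^{**}=x$, $(x\odot y)^*=y^*\odot x^*$, $(\bigsqcup x_i)^*=\bigsqcup x_i^*$. An involutive generalized dynamic algebra (IDA) is such a quantale with ${\sim}\colon K\to K$ satisfying, for all $x,y$ and families $(x_i)$: ${\sim}(x\odot{\sim}{\sim}y)={\sim}(x\odot y)$; ${\sim}(\bigsqcup{\sim}{\sim}x_i)={\sim}(\bigsqcup x_i)$; $({\sim}x)^*={\sim}x$; ${\sim}{\sim}({\sim}{\sim}x\odot y)={\sim}({\sim}x\sqcup{\sim}({\sim}x\sqcup y))$. Test set $\widetilde K=\{{\sim}k\}$; $\bigvee W={\sim}{\sim}\bigsqcup W$; $w^\perp={\sim}w$; $k\preceq l$ iff $\bigvee\{k,l\}=l$; $k\bullet v={\sim}{\sim}(k\odot v)$; $k\equiv l$ iff $k\bullet w=l\bullet w$ for all $w\in\widetilde K$. IDA morphisms preserve arbitrary joins, $\odot$, ${}^*$, unit, ${\sim}$ (category $\mathbb{IDA}$); semi-Foulis means $(\widetilde K,\preceq,{}^\perp)$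 is a complete orthomodular lattice. $\mathbb{IM}$: involutive monoids and homomorphisms. For a complete orthomodular lattice $\mathcal M$: $\pi_m(x)=m\wedge(m^\perp\vee x)$; $\mathbf{Lin}(\mathcal M)$ is the set of maps $f$ admitting $f^*$ with $f(x)\le y^\perp\iff x\le f^*(y)^\perp$, an IDA under pointwise joins, composition, ${}^*$, $\mathrm{id}$, ${\sim}f=\pi_{f(1)^\perp}$. For an involutive submonoid $L\supseteq\{\pi_m\}$, $\mathscr P(L)$ is the IDA of subsets of $L$ with union, setwise composition and involution, unit $\{\mathrm{id}\}$, ${\sim}A=\{\pi_{(\bigvee_{a\in A}a(1))^\perp}\}$. $\mathscr T\colon\mathbb{IDA}\to\mathbb{IM}$ satisfies: (T1) $\widetilde K\subseteq\mathscr T(K)\subseteq K$, $\mathscr T(K)$ an involutive submonoid; (T2) for semi-Foulis $\mathfrak K$ with $s=t\iff s\equiv t$ on $\mathscr T(K)$, $k\mapsto k\bullet(-)$ is an isomorphism $\mathscr T(\mathfrak K)\to\mathscr T(\mathbf{Lin}(\widetilde{\mathfrak K}))$; (T3) $f\mapsto\{f\}$ is an isomorphism $\mathscr T(\mathbf{Lin}(\mathcal M))\to\mathscr T(\mathscr P(\mathscr T(\mathbf{Lin}(\mathcal M))))$; (T4) $\mathscr T(f)$ is the restriction of $f$. A $\mathscr T$-based orthomodular dynamic algebra is an IDA with: (TODA1) $(\widetilde K,\preceq,{}^\perp)$ a complete orthomodular lattice; (TODA2) every $A$ with $\mathscr T(K)\subseteq A\subseteq K$ closed under $\odot$, ${}^*$,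 arbitrary joins equals $K$; (TODA3) for $S,T\subseteq\mathscr T(K)$, $\bigsqcup S=\bigsqcup T$ iff $S=T$; (TODA4) for $s,t\in\mathscr T(K)$, $s=t$ iff $s\equiv t$. $\mathscr T\mathbb{ODA}$: these objects with bijective IDA morphisms. $\mathbb{COL}$: complete orthomodular lattices with ortholattice isomorphisms (bijections $g$ with $m\le n\iff g(m)\le g(n)$, $g(m^\perp)=g(m)^\perp$). *)

From Stdlib Require Import ClassicalEpsilon.
Set Implicit Arguments.
Unset Strict Implicit.

Definition is_lub {A : Type} (le : A -> A -> Prop) (S : A -> Prop) (s : A) : Prop :=
  (forall x, S x -> le x s) /\ (forall u, (forall x, S x -> le x u) -> le s u).

Definition is_glb {A : Type} (le : A -> A -> Prop) (S : A -> Prop) (s : A) : Prop :=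
  (forall x, S x -> le s x) /\ (forall u, (forall x, S x -> le u x) -> le u s).

Definition pairset {A : Type} (a b : A) : A -> Prop := fun x => x = a \/ x = b.

Record isCOML {A : Type} (le : A -> A -> Prop) (perp : A -> A) : Prop := {
  coml_refl  : forall x, le x x;
  coml_antisym : forall x y, le x y -> le y x -> x = y;
  coml_trans : forall x y z, le x y -> le y z -> le x z;
  coml_lub   : forall S : A -> Prop, exists s, is_lub le S s;
  coml_perpK : forall m, perp (perp m) = m;
  coml_perp_anti : forall m n, le m n -> le (perp n) (perp m);
  coml_join_perp : forall m t, is_lub le (pairset m (perp m)) t -> forall x, le x t;
  coml_meet_perp : forall m b, is_glb le (pairset m (perp m)) b -> forall x, le b x;
  coml_orthomod : forall m n, le m n ->
      forall c, is_glb le (pairset n (perp m)) c -> is_lub le (pairset m c) n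
}.

Record COL := {
  ccar :> Type;
  cle : ccar -> ccar -> Prop;
  cperp : ccar -> ccar;
  cax : isCOML cle cperp
}.

Definition bijective {A B : Type} (g : A -> B) : Prop :=
  (forall x y, g x = g y -> x = y) /\ (forall y, exists x, g x = y).

(* Morphisms of COL: ortholattice isomorphisms *)
Definition ortho_iso {A B : Type} (leA : A -> A -> Prop) (perpA : A -> A)
  (leB : B -> B -> Prop) (perpB : B -> B) (g : A -> B) : Prop :=
  bijective g /\ (forall m n, leA m n <-> leB (g m) (g n))
  /\ (forall m, g (perpA m) = perpB (g m)).

Record rawIDA := {
  car :> Type;
  jn : (car -> Prop) -> car;
  mul : car -> car -> car;
  star : car -> car;
  unit : car;
  neg : car -> car
}.

Arguments jn {r} S.
Arguments mul {r} x y.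
Arguments star {r} x.
Arguments unit r : assert.
Arguments neg {r} x.

Definition img {A B : Type} (f : A -> B) (S : A -> Prop) : B -> Prop :=
  fun y => exists x, S x /\ y = f x.

Definition jn2 {K : rawIDA} (a b : K) : K := jn (pairset a b).

(* the IDA axioms; joins of families (x_i) are joins of their image sets *)
Record isIDA (K : rawIDA) : Prop := {
  ida_cjsl : exists le : K -> K -> Prop,
      (forall x, le x x) /\ (forall x y, le x y -> le y x -> x = y)
      /\ (forall x y z, le x y -> le y z -> le x z)
      /\ (forall S, is_lub le S (jn S));
  ida_assoc : forall x y z : K, mul x (mul y z) = mul (mul x y) z;
  ida_distl : forall (x : K) S, mul x (jn S) = jn (img (mul x) S);
  ida_distr : forall (x : K) S, mul (jn S) x = jn (img (fun s => mul s x) S);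
  ida_unitl : forall x : K, mul (unit K) x = x;
  ida_unitr : forall x : K, mul x (unit K) = x;
  ida_starK : forall x : K, star (star x) = x;
  ida_starM : forall x y : K, star (mul x y) = mul (star y) (star x);
  ida_starJ : forall S : K -> Prop, star (jn S) = jn (img star S);
  ida_neg1 : forall x y : K, neg (mul x (neg (neg y))) = neg (mul x y);
  ida_neg2 : forall S : K -> Prop, neg (jn (img (fun x => neg (neg x)) S)) = neg (jn S);
  ida_neg3 : forall x : K, star (neg x) = neg x;
  ida_neg4 : forall x y : K,
      neg (neg (mul (neg (neg x)) y)) = neg (jn2 (neg x) (neg (jn2 (neg x) y)))
}.

Definition isMorph (K1 K2 : rawIDA) (f : K1 -> K2) : Prop :=
  (forall S, f (jn S) = jn (img f S))
  /\ (forall x y, f (mul x y) = mul (f x) (f y))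
  /\ (forall x, f (star x) = star (f x))
  /\ f (unit K1) = unit K2
  /\ (forall x, f (neg x) = neg (f x)).

Definition IM_iso (A B : rawIDA) (SA : A -> Prop) (SB : B -> Prop) (h : A -> B) : Prop :=
  (forall x, SA x -> SB (h x))
  /\ (forall x y, SA x -> SA y -> h x = h y -> x = y)
  /\ (forall y, SB y -> exists x, SA x /\ h x = y)
  /\ (forall x y, SA x -> SA y -> h (mul x y) = mul (h x) (h y))
  /\ (forall x, SA x -> h (star x) = star (h x))
  /\ h (unit A) = unit B.

Section Tests.
Variable K : rawIDA.

Definition isTest (k : K) : Prop := exists l, k = neg l.
Definition Ktilde : Type := {k : K | isTest k}.
Definition tjoin (W : K -> Prop) : K := neg (neg (jn W)).
Definition preceq (k l : K) : Prop := tjoin (pairset k l) = l.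
Definition preceqT (k l : Ktilde) : Prop := preceq (proj1_sig k) (proj1_sig l).
Definition perpT (k : Ktilde) : Ktilde :=
  exist _ (neg (proj1_sig k)) (ex_intro _ (proj1_sig k) eq_refl).
Definition bullet (k v : K) : K := neg (neg (mul k v)).
Definition bulletT (k : K) (w : Ktilde) : Ktilde :=
  exist _ (bullet k (proj1_sig w)) (ex_intro _ (neg (mul k (proj1_sig w))) eq_refl).
Definition equivK (k l : K) : Prop := forall w, isTest w -> bullet k w = bullet l w.

Definition semiFoulis : Prop := isCOML preceqT perpT.

Definition testCOL (H : semiFoulis) : COL := Build_COL H.
End Tests.

Section Lin.
Variable M : COL.

Definition csup (S : M -> Prop) : M :=
  proj1_sig (constructive_indefinite_description _ (coml_lub (cax M) S)).
Definition cjoin2 (a b : M) : M := csup (pairset a b).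
Definition cmeet2 (a b : M) : M :=
  csup (fun x => forall y, pairset a b y -> cle x y).
Definition ctop : M := csup (fun _ => True).

Definition sasaki (m x : M) : M := cmeet2 m (cjoin2 (cperp m) x).

Definition hasAdj (f : M -> M) : Prop :=
  exists fs : M -> M, forall x y, cle (f x) (cperp y) <-> cle x (cperp (fs y)).

Definition LinT : Type := {f : M -> M | hasAdj f}.

Lemma hasAdj_id : hasAdj (fun x => x).
Proof. exists (fun y => y); intros x y; split; intro h; exact h. Qed.

Definition lin_id : LinT := exist _ (fun x => x) hasAdj_id.

(* the element of Lin(M) with underlying map g (g always has an adjoint in the
   uses below, by the paper's lemmas; the fallback branch is never relevant) *)
Definition lin_of (g : M -> M) : LinT :=
  match excluded_middle_informative (hasAdj g) with
  | left p => exist _ g p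
  | right _ => lin_id
  end.

Definition adjoint (f : LinT) : M -> M :=
  proj1_sig (constructive_indefinite_description _ (proj2_sig f)).

Definition lin_jn (F : LinT -> Prop) : LinT :=
  lin_of (fun x => csup (fun y => exists f, F f /\ y = proj1_sig f x)).
Definition lin_mul (f g : LinT) : LinT := lin_of (fun x => proj1_sig f (proj1_sig g x)).
Definition lin_star (f : LinT) : LinT := lin_of (adjoint f).
Definition lin_neg (f : LinT) : LinT := lin_of (sasaki (cperp (proj1_sig f ctop))).

Definition Lin : rawIDA := Build_rawIDA lin_jn lin_mul lin_star lin_id lin_neg.

Variable L : LinT -> Prop.

Definition PT : Type := {A : LinT -> Prop | forall a, A a -> L a}.

Definition toP (A : LinT -> Prop) : PT :=
  match excluded_middle_informative (forall a, A a -> L a) with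
  | left p => exist _ A p
  | right _ => exist (fun B : LinT -> Prop => forall a, B a -> L a)
                     (fun _ => False) (fun a (h : False) => False_ind _ h)
  end.

Definition P_jn (F : PT -> Prop) : PT :=
  toP (fun a => exists A, F A /\ proj1_sig A a).
Definition P_mul (A B : PT) : PT :=
  toP (fun c => exists a b, proj1_sig A a /\ proj1_sig B b /\ c = lin_mul a b).
Definition P_star (A : PT) : PT :=
  toP (fun c => exists a, proj1_sig A a /\ c = lin_star a).
Definition P_unit : PT := toP (fun c => c = lin_id).
Definition P_neg (A : PT) : PT :=
  toP (fun c => c = lin_of (sasaki (cperp
          (csup (fun y => exists a, proj1_sig A a /\ y = proj1_sig a ctop))))).

Definition PL : rawIDA := Build_rawIDA P_jn P_mul P_star P_unit P_neg.

Definition P_single (f : LinT) : PT := toP (fun c => c = f).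
End Lin.

(* The functor T : IDA -> IM, given by T(K) as a subset of K            *)
Definition Tfun := forall K : rawIDA, K -> Prop.

Definition T1 (T : Tfun) : Prop :=
  forall K, isIDA K ->
    (forall k, @isTest K k -> T K k) /\ T K (unit K)
    /\ (forall x y, T K x -> T K y -> T K (mul x y))
    /\ (forall x, T K x -> T K (star x)).

(* functoriality together with (T4): T(f) is the restriction of f *)
Definition T4 (T : Tfun) : Prop :=
  forall (K1 K2 : rawIDA), isIDA K1 -> isIDA K2 ->
    forall f : K1 -> K2, @isMorph K1 K2 f -> forall x, T K1 x -> T K2 (f x).

Definition T2 (T : Tfun) : Prop :=
  forall (K : rawIDA) (HK : isIDA K) (H : semiFoulis K),
    (forall s t, T K s -> T K t -> (s = t <-> @equivK K s t)) ->
    exists h : K -> Lin (testCOL H),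
      (forall k, T K k -> proj1_sig (h k) = @bulletT K k)
      /\ IM_iso (T K) (T (Lin (testCOL H))) h.

Definition T3 (T : Tfun) : Prop :=
  forall M : COL,
    IM_iso (T (Lin M)) (T (PL (T (Lin M)))) (P_single (T (Lin M))).

Definition TODA (T : Tfun) (K : rawIDA) : Prop :=
  isIDA K
  /\ semiFoulis K
  /\ (forall A : K -> Prop, (forall x, T K x -> A x) ->
        (forall x y, A x -> A y -> A (mul x y)) ->
        (forall x, A x -> A (star x)) ->
        (forall S, (forall x, S x -> A x) -> A (jn S)) ->
        forall x, A x)
  /\ (forall S S' : K -> Prop, (forall x, S x -> T K x) -> (forall x, S' x -> T K x) ->
        (jn S = jn S' <-> forall x, S x <-> S' x))
  /\ (forall s t, T K s -> T K t -> (s = t <-> @equivK K s t)).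

Definition Psi_mor (K1 K2 : rawIDA) (phi : K1 -> K2) (k : Ktilde K1) : Ktilde K2 :=
  match excluded_middle_informative (@isTest K2 (phi (proj1_sig k))) with
  | left p => exist _ (phi (proj1_sig k)) p
  | right _ => exist _ (neg (unit K2)) (ex_intro _ (unit K2) eq_refl)
  end.

(* The test space of a TODA is a complete orthomodular lattice by (TODA1), so
   Psi is well defined on objects.  An IDA morphism commutes with [neg], hence
   sends tests to tests and commutes with the test join [tjoin] and with
   [perpT]; since [preceq] is defined by an equation between test joins, a
   bijective morphism restricts to an ortholattice isomorphism of the test
   spaces.  Identities and composites are preserved because restriction is. *)

From Stdlib Require Import ClassicalEpsilon ProofIrrelevance FunctionalExtensionality
  PropExtensionality.
Set Implicit Arguments.

Lemma img_pairset (A B : Type) (f : A -> B) (a b : A) :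
  img f (pairset a b) = pairset (f a) (f b).
Proof.
  apply functional_extensionality; intro y; apply propositional_extensionality.
  unfold img, pairset; split.
  - intros [x [[-> | ->] ->]]; auto.
  - intros [-> | ->]; eauto.
Qed.

Lemma img_comp (A B C : Type) (f : A -> B) (g : B -> C) (S : A -> Prop) :
  img (fun x => g (f x)) S = img g (img f S).
Proof.
  apply functional_extensionality; intro z; apply propositional_extensionality.
  unfold img; split.
  - intros [x [Sx ->]]. exists (f x). eauto.
  - intros [y [[x [Sx ->]] ->]]. eauto.
Qed.

Lemma isMorph_id (K : rawIDA) : isMorph (fun x : K => x).
Proof.
  repeat split. intro S. f_equal.
  apply functional_extensionality; intro y; apply propositional_extensionality.
  unfold img; split.
  - intro Sy. eauto.
  - intros [x [Sx ->]]. exact Sx.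
Qed.

Lemma isMorph_comp (K1 K2 K3 : rawIDA) (phi : K1 -> K2) (psi : K2 -> K3) :
  isMorph phi -> isMorph psi -> isMorph (fun x => psi (phi x)).
Proof.
  intros (j1 & m1 & s1 & u1 & n1) (j2 & m2 & s2 & u2 & n2).
  repeat split; intros.
  - rewrite j1, j2, (img_comp phi psi). reflexivity.
  - rewrite m1, m2. reflexivity.
  - rewrite s1, s2. reflexivity.
  - rewrite u1, u2. reflexivity.
  - rewrite n1, n2. reflexivity.
Qed.

Lemma Ktilde_eq (K : rawIDA) (k l : Ktilde K) : proj1_sig k = proj1_sig l -> k = l.
Proof. apply eq_sig_hprop. intros; apply proof_irrelevance. Qed.

Section MorphismOnTests.
Variables (K1 K2 : rawIDA) (phi : K1 -> K2).
Hypothesis phi_morph : isMorph phi.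

Lemma isTest_morph (k : K1) : isTest k -> isTest (phi k).
Proof.
  destruct phi_morph as (_ & _ & _ & _ & phi_neg).
  intros [l ->]. exists (phi l). apply phi_neg.
Qed.

Lemma Psi_mor_val (k : Ktilde K1) : proj1_sig (Psi_mor phi k) = phi (proj1_sig k).
Proof.
  destruct k as [k Hk]. unfold Psi_mor; simpl.
  destruct (excluded_middle_informative _) as [| Hn]; [reflexivity |].
  exfalso. exact (Hn (isTest_morph Hk)).
Qed.

Lemma tjoin_morph (W : K1 -> Prop) : phi (tjoin W) = tjoin (img phi W).
Proof.
  destruct phi_morph as (phi_jn & _ & _ & _ & phi_neg).
  unfold tjoin. rewrite !phi_neg, phi_jn. reflexivity.
Qed.

Lemma preceq_morph (k l : K1) : preceq k l -> preceq (phi k) (phi l).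
Proof.
  unfold preceq. intro E.
  rewrite <- img_pairset, <- tjoin_morph, E. reflexivity.
Qed.

Lemma preceq_morph_inj (k l : K1) :
  (forall x y, phi x = phi y -> x = y) -> preceq (phi k) (phi l) -> preceq k l.
Proof.
  unfold preceq. intros phi_inj E. apply phi_inj.
  rewrite tjoin_morph, img_pairset. exact E.
Qed.

Lemma Psi_mor_perpT (k : Ktilde K1) : Psi_mor phi (perpT k) = perpT (Psi_mor phi k).
Proof.
  destruct phi_morph as (_ & _ & _ & _ & phi_neg).
  apply Ktilde_eq. rewrite Psi_mor_val. simpl. rewrite Psi_mor_val. apply phi_neg.
Qed.

Lemma Psi_mor_ortho_iso :
  bijective phi -> ortho_iso (@preceqT K1) (@perpT K1) (@preceqT K2) (@perpT K2)
                             (Psi_mor phi).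
Proof.
  destruct phi_morph as (_ & _ & _ & _ & phi_neg).
  intros [phi_inj phi_surj].
  split; [split | split].
  - intros k l E. apply Ktilde_eq, phi_inj. rewrite <- !Psi_mor_val, E. reflexivity.
  - intros [y [l ->]]. destruct (phi_surj l) as [x <-].
    exists (exist (@isTest K1) (neg x) (ex_intro _ x eq_refl)).
    apply Ktilde_eq. rewrite Psi_mor_val. apply phi_neg.
  - intros k l. unfold preceqT. rewrite !Psi_mor_val. split.
    + apply preceq_morph.
    + apply preceq_morph_inj, phi_inj.
  - exact Psi_mor_perpT.
Qed.

End MorphismOnTests.

Lemma Psi_mor_id (K : rawIDA) (k : Ktilde K) : Psi_mor (fun x : K => x) k = k.
Proof.
  apply Ktilde_eq, (Psi_mor_val (isMorph_id K)).
Qed.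

Lemma Psi_mor_comp (K1 K2 K3 : rawIDA) (phi : K1 -> K2) (psi : K2 -> K3) :
  isMorph phi -> isMorph psi ->
  forall k, Psi_mor (fun x => psi (phi x)) k = Psi_mor psi (Psi_mor phi k).
Proof.
  intros phi_morph psi_morph k.
  apply Ktilde_eq.
  rewrite (Psi_mor_val (isMorph_comp phi_morph psi_morph)),
    (Psi_mor_val psi_morph), (Psi_mor_val phi_morph).
  reflexivity.
Qed.

Theorem theorem6p1 (T : Tfun) (HT1 : T1 T) (HT2 : T2 T) (HT3 : T3 T) (HT4 : T4 T) :
  (* Psi on objects lands in COL *)
  (forall K : rawIDA, TODA T K -> isCOML (@preceqT K) (@perpT K))
  /\
  (* Psi on morphisms: the restriction of phi maps tests to tests and is an
     ortholattice isomorphism *)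
  (forall (K1 K2 : rawIDA) (phi : K1 -> K2),
      TODA T K1 -> TODA T K2 -> @isMorph K1 K2 phi -> bijective phi ->
      (forall k, proj1_sig (Psi_mor phi k) = phi (proj1_sig k))
      /\ ortho_iso (@preceqT K1) (@perpT K1) (@preceqT K2) (@perpT K2) (Psi_mor phi))
  /\
  (* preservation of identities *)
  (forall K : rawIDA, TODA T K -> forall k, Psi_mor (fun x : K => x) k = k)
  /\
  (* preservation of composition *)
  (forall (K1 K2 K3 : rawIDA) (phi : K1 -> K2) (psi : K2 -> K3),
      TODA T K1 -> TODA T K2 -> TODA T K3 ->
      @isMorph K1 K2 phi -> bijective phi -> @isMorph K2 K3 psi -> bijective psi ->
      forall k, Psi_mor (fun x => psi (phi x)) k = Psi_mor psi (Psi_mor phi k)).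
Proof.
  split; [| split; [| split]].
  - intros K (_ & HK & _). exact HK.
  - intros K1 K2 phi _ _ Hphi Hbij.
    split; [exact (Psi_mor_val Hphi) | exact (Psi_mor_ortho_iso Hphi Hbij)].
  - intros K _. apply Psi_mor_id.
  - intros K1 K2 K3 phi psi _ _ _ Hphi _ Hpsi _. exact (Psi_mor_comp Hphi Hpsi).
Qed.
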